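(* Let $n\ge 2$, $q=e^{2\pi i/6}$, and let $\varphi:\mathcal{H}_n(q)\to Q_n$ be the algebra homomorphism with $\varphi(g_i)=s_i$. Then the functional $a\mapsto \mathrm{Tr}(\varphi(a))$ on $\mathcal{H}_n(q)$ equals the Markov trace $\mathrm{tr}$ with parameter $\eta=1/2$; in particular $\mathrm{Tr}(f_{n-1})=1/2$ where $f_{n-1}=\varphi(e_{n-1})=(q-s_{n-1})/(1+q)$, and $\mathrm{Tr}(f_{n-1}b)=\mathrm{Tr}(f_{n-1})\mathrm{Tr}(b)$ for all $b$ in the subalgebra generated by $u_1,v_1,\dots,u_{n-2},v_{n-2}$.
   Context: $Q_n$ is the $\mathbb{C}$-algebra with generators $u_1,v_1,\dots,u_{n-1},v_{n-1}$ and relations (G1) $u_i^2=v_i^2=-1$; (G2) $[u_i,v_j]=-1$ if $|i-j|\le1$; (G3) $[u_i,v_j]=1$ if $|i-j|\ge2$; (G4) $[u_i,u_j]=[v_i,v_j]=1$, with $[a,b]=aba^{-1}b^{-1}$. Every word in the generators equals $\pm$ a unique basis word $u_1^{\epsilon_1}\cdots u_{n-1}^{\epsilon_{n-1}}v_1^{\nu_1}\cdots v_{n-1}^{\nu_{n-1}}$ ($\epsilon_i,\nu_i\in\{0,1\}$); $\mathrm{Tr}$ is the linear functional with $\mathrm{Tr}(1)=1$ and $\mathrm{Tr}(w)=0$ for non-identity basis words $w$. $s_i=\frac{-1}{2q}(1+u_i+v_i+u_iv_i)$; these satisfy the braid relations and $(s_i-q)(s_i+1)=0$, so $\varphi$ is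 well defined. The Hecke algebra $\mathcal{H}_n(q)$ has generators $g_1,\dots,g_{n-1}$ with relations $g_ig_{i+1}g_i=g_{i+1}g_ig_{i+1}$, $g_ig_j=g_jg_i$ ($|i-j|>1$), $(g_i+1)(g_i-q)=0$; $e_i=(q-g_i)/(1+q)$. The Markov trace with parameter $\eta$ is the unique linear functional $\mathrm{tr}$ on $\bigcup_n\mathcal{H}_n(q)$ with $\mathrm{tr}(1)=1$, $\mathrm{tr}(ab)=\mathrm{tr}(ba)$, $\mathrm{tr}(xe_n)=\eta\,\mathrm{tr}(x)$ for $x\in\mathcal{H}_n(q)$. *)

From HB Require Import structures.
From mathcomp Require Import all_boot all_order all_algebra all_field.
Set Implicit Arguments. Unset Strict Implicit. Unset Printing Implicit Defensive.
Import Order.TTheory GRing.Theory Num.Theory.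
Local Open Scope ring_scope.

(* The algebra Q_n, n >= 2, with m := n - 1 pairs of generators
   u_1, v_1, ..., u_m, v_m (generator u_{i+1} is indexed by i : 'I_m).
   Q_n is realised on its basis of words
     u_1^{e_1} ... u_m^{e_m} v_1^{f_1} ... v_m^{f_m},
   a basis word being a pair (e, f) of 0/1-vectors.                      *)

Definition bvec (m : nat) := {ffun 'I_m -> bool}.
Definition basis (m : nat) := (bvec m * bvec m)%type.
Definition Q (m : nat) := {ffun basis m -> algC}.

Definition bxor m (a b : bvec m) : bvec m := [ffun i => a i (+) b i].
Definition band_card m (a b : bvec m) : nat := #|[pred i | a i && b i]|.

(* number of anticommuting pairs (v_j, u_i), |i - j| <= 1, met when moving
   v^nu past u^eps' *)
Definition cross_card m (nu eps' : bvec m) : nat :=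
  #|[pred ji : 'I_m * 'I_m | [&& nu ji.1, eps' ji.2 &
        (ji.1 <= ji.2.+1)%N && (ji.2 <= ji.1.+1)%N]]|.

(* (u^e v^f)(u^e' v^f') = (-1)^sign * u^(e xor e') v^(f xor f'),
   using (G1)-(G4): u_i^2 = v_i^2 = -1, u_i v_j = - v_j u_i iff |i-j|<=1,
   all other pairs commute. *)
Definition bsign m (a b : basis m) : algC :=
  (-1) ^+ (cross_card a.2 b.1 + band_card a.1 b.1 + band_card a.2 b.2).

Definition bmul m (a b : basis m) : basis m := (bxor a.1 b.1, bxor a.2 b.2).

Definition bQ m (w : basis m) : Q m := [ffun c => (c == w)%:R].

Definition Qadd m (x y : Q m) : Q m := [ffun c => x c + y c].
Definition Qscale m (k : algC) (x : Q m) : Q m := [ffun c => k * x c].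
Definition Qmul m (x y : Q m) : Q m :=
  [ffun c => \sum_(a : basis m) \sum_(b : basis m)
               (if bmul a b == c then bsign a b * x a * y b else 0)].

Definition bzero m : bvec m := [ffun _ => false].
Definition bdelta m (i : 'I_m) : bvec m := [ffun j => j == i].

Definition Q1 m : Q m := bQ (bzero m, bzero m).
Definition Qu m (i : 'I_m) : Q m := bQ (bdelta i, bzero m).
Definition Qv m (i : 'I_m) : Q m := bQ (bzero m, bdelta i).

Definition Tr m (x : Q m) : algC := x (bzero m, bzero m).

(* q = e^{2 pi i / 6} = (1 + i sqrt 3) / 2 *)
Definition q6 : algC := (1 + 'i * sqrtC 3) / 2.

Definition Qs m (i : 'I_m) : Q m :=
  Qscale (- (2 * q6)^-1)
    (Qadd (Qadd (Q1 m) (Qu i)) (Qadd (Qv i) (Qmul (Qu i) (Qv i)))).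

Definition Qf m (i : 'I_m) : Q m :=
  Qscale (1 + q6)^-1 (Qadd (Qscale q6 (Q1 m)) (Qscale (-1) (Qs i))).

(* Hecke algebra H_n(q): spanned by words in g_1, ..., g_{n-1}; a word is a
   list of indices (index i : 'I_m stands for g_{i+1}).  phi is the algebra
   homomorphism g_i |-> s_i, so phi(g_{w_1} ... g_{w_k}) = s_{w_1}...s_{w_k}. *)
Definition phi_word m (w : seq 'I_m) : Q m := foldr (fun i x => Qmul (Qs i) x) (Q1 m) w.

(* the functional a |-> Tr(phi(a)), on words (it is determined on H_n by
   linearity) *)
Definition TrPhi m (w : seq 'I_m) : algC := Tr (phi_word w).

(* A linear functional on H_n(q) is the same as a function t on words in the
   generators that is compatible with the defining relations of H_n(q) in
   every context.  t is the restriction to H_n(q) of a Markov trace with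
   parameter eta iff moreover tr(1)=1, tr(ab)=tr(ba) and
   tr(x e_{k}) = eta tr(x) for x in H_k, e_k = (q - g_k)/(1+q), k < n. *)
Definition is_markov_trace m (q eta : algC) (t : seq 'I_m -> algC) : Prop :=
      (forall (a b : seq 'I_m) (i j : 'I_m), val j = (val i).+1 :> nat ->
         t (a ++ [:: i; j; i] ++ b) = t (a ++ [:: j; i; j] ++ b)) /\
      (forall (a b : seq 'I_m) (i j : 'I_m), ((val i).+1 < val j)%N ->
         t (a ++ [:: i; j] ++ b) = t (a ++ [:: j; i] ++ b)) /\
      (* quadratic relation (g_i + 1)(g_i - q) = 0, i.e. g_i^2 = (q-1) g_i + q *)
      (forall (a b : seq 'I_m) (i : 'I_m),
         t (a ++ [:: i; i] ++ b) = (q - 1) * t (a ++ [:: i] ++ b) + q * t (a ++ b)) /\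
      t [::] = 1 /\
      (forall a b : seq 'I_m, t (a ++ b) = t (b ++ a)) /\
      (* Markov property: x a word in g_1..g_k, e_{k+1} = (q - g_{k+1})/(1+q);
         here k : 'I_m stands for g_{k+1} *)
      (forall (k : 'I_m) (x : seq 'I_m), all (fun i : 'I_m => (val i < val k)%N) x ->
         (q * t x - t (rcons x k)) / (1 + q) = eta * t x).

Inductive genQ m (P : 'I_m -> bool) : Q m -> Prop :=
  | genQ_u i : P i -> genQ P (Qu i)
  | genQ_v i : P i -> genQ P (Qv i)
  | genQ_1 : genQ P (Q1 m)
  | genQ_add x y : genQ P x -> genQ P y -> genQ P (Qadd x y)
  | genQ_scale k x : genQ P x -> genQ P (Qscale k x)
  | genQ_mul x y : genQ P x -> genQ P y -> genQ P (Qmul x y).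

(* The words u^e v^f form a basis of Q_n on which the product is a sign times
   the xor of the exponents, and Tr, the coefficient of the empty word, is a
   trace.  A relation between the s_i involves at most two indices i, j; the
   products of u_i, v_i, u_j, v_j only depend on whether i = j and whether
   |i - j| <= 1, so each relation is checked by computing with integer
   combinations of such "local words".
   Since s_k = c (1 + u_k)(1 + v_k) with c = -1/(2q), for y free of u_k, v_k
   only the term 1 of s_k contributes to Tr (y s_k); hence Tr (y s_k) = c Tr y
   and Tr (y f_k) = (q - c)/(1 + q) Tr y = Tr y / 2.
   Uniqueness: modulo the Hecke relations every word in g_1, ..., g_k is a
   combination of words containing g_k at most once (Jones' normal form), and
   on those the trace and Markov properties reduce tr to shorter alphabets. *)

From HB Require Import structures.
From mathcomp Require Import all_boot all_order all_algebra all_field ring.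
Import Order.TTheory GRing.Theory Num.Theory.
Local Open Scope ring_scope.

Set Implicit Arguments. Unset Strict Implicit. Unset Printing Implicit Defensive.

(** * Signs and the basis words *)

Section SignOfCard.

Variables (R : comPzRingType) (T : finType).

Lemma sign_card (P : pred T) : (-1 : R) ^+ #|P| = \prod_x (-1) ^+ P x.
Proof.
rewrite -sum1_card expr_sum [RHS](bigID P) /=.
rewrite [X in _ = _ * X]big1 ?mulr1 => [|x /negbTE -> //].
by apply: eq_bigr => x Px; rewrite -topredE /= in Px; rewrite Px.
Qed.

Lemma sign_card_addb (f g h : T -> bool) :
  (-1 : R) ^+ #|[pred x | (f x (+) g x) && h x]| =
  (-1) ^+ #|[pred x | f x && h x]| * (-1) ^+ #|[pred x | g x && h x]|.
Proof.
rewrite !sign_card -big_split /=; apply: eq_bigr => x _.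
by case: (f x); case: (g x); case: (h x); rewrite /= ?expr0 ?expr1 ?mulrNN ?mulr1 ?mul1r.
Qed.

End SignOfCard.

Definition adjacent m (i j : 'I_m) : bool := (i <= j.+1)%N && (j <= i.+1)%N.

Lemma bxorE m (a b : bvec m) i : bxor a b i = a i (+) b i.
Proof. by rewrite ffunE. Qed.

Lemma bxorA m (a b c : bvec m) : bxor a (bxor b c) = bxor (bxor a b) c.
Proof. by apply/ffunP => i; rewrite !bxorE addbA. Qed.

Lemma bxorC m (a b : bvec m) : bxor a b = bxor b a.
Proof. by apply/ffunP => i; rewrite !bxorE addbC. Qed.

Lemma bxor0 m (a : bvec m) : bxor a (bzero m) = a.
Proof. by apply/ffunP => i; rewrite bxorE ffunE addbF. Qed.

Lemma bxorK m (a b : bvec m) : bxor a (bxor a b) = b.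
Proof. by apply/ffunP => i; rewrite !bxorE addKb. Qed.

Lemma bxorvv m (a : bvec m) : bxor a a = bzero m.
Proof. by apply/ffunP => i; rewrite bxorE ffunE addbb. Qed.

Lemma band_cardC m (a b : bvec m) : band_card a b = band_card b a.
Proof. by apply: eq_card => i; rewrite !inE andbC. Qed.

Lemma sign_band_xorl (R : comPzRingType) m (a a' b : bvec m) :
  (-1 : R) ^+ band_card (bxor a a') b = (-1) ^+ band_card a b * (-1) ^+ band_card a' b.
Proof.
by rewrite /band_card -sign_card_addb; congr (_ ^+ _); apply: eq_card => i; rewrite !inE bxorE.
Qed.

Lemma sign_band_xorr (R : comPzRingType) m (a b b' : bvec m) :
  (-1 : R) ^+ band_card a (bxor b b') = (-1) ^+ band_card a b * (-1) ^+ band_card a b'.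
Proof. by rewrite ![band_card a _]band_cardC sign_band_xorl. Qed.

Lemma sign_cross_xorl (R : comPzRingType) m (a a' b : bvec m) :
  (-1 : R) ^+ cross_card (bxor a a') b = (-1) ^+ cross_card a b * (-1) ^+ cross_card a' b.
Proof.
by rewrite /cross_card -sign_card_addb; congr (_ ^+ _); apply: eq_card => x; rewrite !inE bxorE.
Qed.

Lemma sign_cross_xorr (R : comPzRingType) m (a b b' : bvec m) :
  (-1 : R) ^+ cross_card a (bxor b b') = (-1) ^+ cross_card a b * (-1) ^+ cross_card a b'.
Proof.
rewrite /cross_card.
have reorder c : #|[pred x : 'I_m * 'I_m | [&& a x.1, c x.2 & adjacent x.1 x.2]]| =
                 #|[pred x | c x.2 && (a x.1 && adjacent x.1 x.2)]|.
  by apply: eq_card => x; rewrite !inE andbCA.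
rewrite !reorder -sign_card_addb; congr (_ ^+ _); apply: eq_card => x.
by rewrite !inE bxorE.
Qed.

Definition bone m : basis m := (bzero m, bzero m).

Lemma bmulA m (a b c : basis m) : bmul a (bmul b c) = bmul (bmul a b) c.
Proof. by rewrite /bmul /= !bxorA. Qed.

Lemma bmulC m (a b : basis m) : bmul a b = bmul b a.
Proof. by rewrite /bmul bxorC [bxor a.2 _]bxorC. Qed.

Lemma bmul1 m (a : basis m) : bmul a (bone m) = a.
Proof. by case: a => a1 a2; rewrite /bmul /= !bxor0. Qed.

Lemma bmulK m (a b : basis m) : bmul a (bmul a b) = b.
Proof. by case: b => b1 b2; rewrite /bmul /= !bxorK. Qed.

Lemma bmulvv m (a : basis m) : bmul a a = bone m.
Proof. by rewrite /bmul !bxorvv. Qed.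

Lemma bmul_inj m (a : basis m) : injective (bmul a).
Proof. exact: can_inj (bmulK a). Qed.

Lemma bsign_mull m (a a' b : basis m) : bsign (bmul a a') b = bsign a b * bsign a' b.
Proof.
rewrite /bsign /= !exprD sign_cross_xorl !sign_band_xorl.
ring.
Qed.

Lemma bsign_mulr m (a b b' : basis m) : bsign a (bmul b b') = bsign a b * bsign a b'.
Proof.
rewrite /bsign /= !exprD sign_cross_xorr !sign_band_xorr.
ring.
Qed.

Lemma band_card0l m (b : bvec m) : band_card (bzero m) b = 0%N.
Proof. by apply: eq_card0 => i; rewrite !inE ffunE. Qed.

Lemma band_card0r m (a : bvec m) : band_card a (bzero m) = 0%N.
Proof. by rewrite band_cardC band_card0l. Qed.

Lemma cross_card0l m (b : bvec m) : cross_card (bzero m) b = 0%N.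
Proof. by apply: eq_card0 => x; rewrite !inE ffunE. Qed.

Lemma cross_card0r m (a : bvec m) : cross_card a (bzero m) = 0%N.
Proof. by apply: eq_card0 => x; rewrite !inE ffunE andbF. Qed.

Lemma bsign1l m (a : basis m) : bsign (bone m) a = 1.
Proof. by rewrite /bsign /= cross_card0l !band_card0l. Qed.

Lemma bsign1r m (a : basis m) : bsign a (bone m) = 1.
Proof. by rewrite /bsign /= cross_card0r !band_card0r. Qed.

(** * The algebra Q_n *)

Definition Q0 m : Q m := [ffun _ => 0].

Lemma QaddA m (x y z : Q m) : Qadd x (Qadd y z) = Qadd (Qadd x y) z.
Proof. by apply/ffunP => c; rewrite !ffunE addrA. Qed.

Lemma Qadd0l m (x : Q m) : Qadd (Q0 m) x = x.
Proof. by apply/ffunP => c; rewrite !ffunE add0r. Qed.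

Lemma Qadd0r m (x : Q m) : Qadd x (Q0 m) = x.
Proof. by apply/ffunP => c; rewrite !ffunE addr0. Qed.

Lemma QscaleA m k l (x : Q m) : Qscale k (Qscale l x) = Qscale (k * l) x.
Proof. by apply/ffunP => c; rewrite !ffunE mulrA. Qed.

Lemma Qscale1 m (x : Q m) : Qscale 1 x = x.
Proof. by apply/ffunP => c; rewrite !ffunE mul1r. Qed.

(* Each product [a * b] of basis words hits [c] only for [b = a * c]. *)
Lemma QmulE m (x y : Q m) c :
  Qmul x y c = \sum_a bsign a (bmul a c) * x a * y (bmul a c).
Proof.
rewrite ffunE; apply: eq_bigr => a _.
rewrite (bigD1 (bmul a c)) //= bmulK eqxx big1 ?addr0 // => b /negbTE nb.
by rewrite -(inj_eq (@bmul_inj m a)) bmulK nb.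
Qed.

Lemma QmulA m (x y z : Q m) : Qmul (Qmul x y) z = Qmul x (Qmul y z).
Proof.
apply/ffunP => c; rewrite !QmulE.
under eq_bigr do rewrite QmulE mulr_sumr mulr_suml.
rewrite exchange_big /=; apply: eq_bigr => a _.
rewrite QmulE mulr_sumr (reindex_inj (@bmul_inj m a)) /=; apply: eq_bigr => b _.
have -> : bmul (bmul a b) c = bmul b (bmul a c) by rewrite bmulA (bmulC a).
rewrite bmulK; set e := bmul b (bmul a c).
rewrite -[bmul a c](bmulK b) -/e bsign_mull bsign_mulr.
ring.
Qed.

Lemma Qmul1l m (x : Q m) : Qmul (Q1 m) x = x.
Proof.
apply/ffunP => c; rewrite QmulE (bigD1 (bone m)) //= big1 => [|a na].
  by rewrite addr0 bsign1l [bmul _ c]bmulC bmul1 !ffunE eqxx !mul1r.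
by rewrite ffunE (negbTE na) mulr0 mul0r.
Qed.

Lemma Qmul1r m (x : Q m) : Qmul x (Q1 m) = x.
Proof.
apply/ffunP => c; rewrite QmulE (bigD1 c) //= big1 => [|a na].
  by rewrite addr0 bmulvv bsign1r ffunE eqxx mul1r mulr1.
rewrite ffunE -/(bone m) -(bmulvv a) (inj_eq (@bmul_inj m a)) eq_sym (negbTE na).
by rewrite mulr0.
Qed.

Lemma QmulDl m (x y z : Q m) : Qmul (Qadd x y) z = Qadd (Qmul x z) (Qmul y z).
Proof.
apply/ffunP => c; rewrite [in RHS]ffunE !QmulE -big_split /=.
by apply: eq_bigr => a _; rewrite ffunE mulrDr mulrDl.
Qed.

Lemma QmulDr m (x y z : Q m) : Qmul x (Qadd y z) = Qadd (Qmul x y) (Qmul x z).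
Proof.
apply/ffunP => c; rewrite [in RHS]ffunE !QmulE -big_split /=.
by apply: eq_bigr => a _; rewrite ffunE mulrDr.
Qed.

Lemma QmulZl m k (x y : Q m) : Qmul (Qscale k x) y = Qscale k (Qmul x y).
Proof.
apply/ffunP => c; rewrite [in RHS]ffunE !QmulE mulr_sumr.
by apply: eq_bigr => a _; rewrite ffunE; ring.
Qed.

Lemma QmulZr m k (x y : Q m) : Qmul x (Qscale k y) = Qscale k (Qmul x y).
Proof.
apply/ffunP => c; rewrite [in RHS]ffunE !QmulE mulr_sumr.
by apply: eq_bigr => a _; rewrite ffunE; ring.
Qed.

Lemma Qmul0l m (x : Q m) : Qmul (Q0 m) x = Q0 m.
Proof. by apply/ffunP => c; rewrite QmulE ffunE big1 // => a _; rewrite ffunE mulr0 mul0r. Qed.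

Lemma Qmul0r m (x : Q m) : Qmul x (Q0 m) = Q0 m.
Proof. by apply/ffunP => c; rewrite QmulE ffunE big1 // => a _; rewrite ffunE mulr0. Qed.

Lemma Qmul_bQ m (a b : basis m) : Qmul (bQ a) (bQ b) = Qscale (bsign a b) (bQ (bmul a b)).
Proof.
apply/ffunP => c; rewrite QmulE !ffunE (bigD1 a) //= big1 => [|d nd]; last first.
  by rewrite !ffunE (negbTE nd) mulr0 mul0r.
rewrite addr0 !ffunE eqxx mulr1 -(inj_eq (@bmul_inj m a)) bmulK eq_sym.
by case: eqP => [<-|]; rewrite ?bmulK ?mulr1 ?mulr0.
Qed.

Lemma TrE_mul m (x y : Q m) : Tr (Qmul x y) = \sum_a bsign a a * x a * y a.
Proof. by rewrite /Tr QmulE; apply: eq_bigr => a _; rewrite -/(bone m) bmul1. Qed.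

Lemma Tr_mulC m (x y : Q m) : Tr (Qmul x y) = Tr (Qmul y x).
Proof. by rewrite !TrE_mul; apply: eq_bigr => a _; ring. Qed.

Lemma TrD m (x y : Q m) : Tr (Qadd x y) = Tr x + Tr y.
Proof. by rewrite /Tr ffunE. Qed.

Lemma TrZ m k (x : Q m) : Tr (Qscale k x) = k * Tr x.
Proof. by rewrite /Tr ffunE. Qed.

Lemma Tr1 m : Tr (Q1 m) = 1.
Proof. by rewrite /Tr ffunE eqxx. Qed.

Lemma adjacentC m (i j : 'I_m) : adjacent i j = adjacent j i.
Proof. exact: andbC. Qed.

Lemma adjacentii m (i : 'I_m) : adjacent i i.
Proof. by rewrite /adjacent leqnSn. Qed.

(** * Computations involving two indices *)

Definition bpoint m (i : 'I_m) (p : bool) : bvec m := [ffun j => p && (j == i)].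

Lemma card_eq_and (T : finType) (a : T) (b : bool) : #|[pred x | (x == a) && b]| = b.
Proof.
case: b; last by apply: eq_card0 => x; rewrite !inE andbF.
by apply: (@eq_card1 _ a) => x; rewrite !inE.
Qed.

Lemma band_card_bpoint m (i j : 'I_m) p q :
  band_card (bpoint i p) (bpoint j q) = [&& p, q & i == j].
Proof.
rewrite /band_card -(card_eq_and i); apply: eq_card => x; rewrite !inE !ffunE.
by case: (eqVneq x i) => [->|/negbTE nx]; rewrite ?nx ?andbF ?eqxx ?andbT //= andbA.
Qed.

Lemma cross_card_bpoint m (i j : 'I_m) p q :
  cross_card (bpoint i p) (bpoint j q) = [&& p, q & adjacent i j].
Proof.
rewrite /cross_card -(card_eq_and (i, j)); apply: eq_card => -[x y]; rewrite !inE !ffunE /=.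
case: (eqVneq x i) => [->|/negbTE nx]; case: (eqVneq y j) => [->|/negbTE ny];
  by rewrite xpair_eqE ?nx ?ny ?eqxx ?andbF ?andbT //= !andbA.
Qed.

(* A local word [(e, e', f, f')] stands for [u_i^e u_j^e' v_i^f v_j^f'] for a fixed
   pair of indices [i, j]; when [i = j] the bits [e'] and [f'] are ignored. *)
Definition lword := (bool * bool * bool * bool)%type.

Definition lvec m (i j : 'I_m) (p p' : bool) : bvec m :=
  bxor (bpoint i p) (bpoint j ((i != j) && p')).

Definition lbasis m (i j : 'I_m) (w : lword) : basis m :=
  let: (e, e', f, f') := w in (lvec i j e e', lvec i j f f').

Definition lxor (w w' : lword) : lword :=
  let: (e, e', f, f') := w in let: (g, g', h, h') := w' in
  (e (+) g, e' (+) g', f (+) h, f' (+) h').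

(* The exponent of [-1] in [bsign] of two local words, as a function of
   [d = (i != j)] and [c = adjacent i j]. *)
Definition lsign (d c : bool) (w w' : lword) : nat :=
  let: (e, e', f, f') := w in let: (g, g', h, h') := w' in
  (f && g) + [&& f, d, g' & c] + [&& d, f', g & c] + [&& d, f' & g']
  + (e && g) + [&& d, e' & g'] + (f && h) + [&& d, f' & h'].

Lemma lvec_xor m (i j : 'I_m) p p' r r' :
  bxor (lvec i j p p') (lvec i j r r') = lvec i j (p (+) r) (p' (+) r').
Proof.
apply/ffunP => x; rewrite !ffunE.
by case: p p' r r' (x == i) (x == j) (i != j) => [] [] [] [] [] [] [].
Qed.

Lemma lbasis_mul m (i j : 'I_m) w w' :
  bmul (lbasis i j w) (lbasis i j w') = lbasis i j (lxor w w').
Proof. by case: w w' => [[[e e'] f] f'] [[[g g'] h] h']; rewrite /bmul /= !lvec_xor. Qed.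

Lemma bsign_lbasis m (i j : 'I_m) w w' :
  bsign (lbasis i j w) (lbasis i j w') = (-1) ^+ lsign (i != j) (adjacent i j) w w'.
Proof.
case: w w' => [[[e e'] f] f'] [[[g g'] h] h']; rewrite /bsign /lvec /=.
rewrite !exprD !(sign_cross_xorl, sign_cross_xorr, sign_band_xorl, sign_band_xorr).
rewrite !(cross_card_bpoint, band_card_bpoint) !adjacentii [adjacent j i]adjacentC.
rewrite !eqxx [j == i]eq_sym -!exprD; congr (_ ^+ _).
by case: (i == j) (adjacent i j) e e' f f' g g' h h' => [] [] [] [] [] [] [] [] [] [].
Qed.

Definition lcomb := seq (int * lword).

Definition sign_int (n : nat) (k : int) : int := if odd n then - k else k.

Definition lmul (d c : bool) (s t : lcomb) : lcomb :=
  [seq (sign_int (lsign d c p.2 r.2) (p.1 * r.1), lxor p.2 r.2) | p <- s, r <- t].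

Definition lembed m (i j : 'I_m) (s : lcomb) : Q m :=
  foldr (fun p x => Qadd (Qscale p.1%:~R (bQ (lbasis i j p.2))) x) (Q0 m) s.

Definition lcoef (s : lcomb) (w : lword) : int :=
  foldr (fun p k => (if p.2 == w then p.1 else 0) + k) 0 s.

Lemma lembed_cat m (i j : 'I_m) s t : lembed i j (s ++ t) = Qadd (lembed i j s) (lembed i j t).
Proof. by elim: s => [|p s IH] /=; rewrite ?Qadd0l // IH QaddA. Qed.

Lemma sign_intE n (k : int) : (sign_int n k)%:~R = (-1) ^+ n * (k%:~R : algC).
Proof. by rewrite /sign_int -signr_odd; case: (odd n); rewrite ?mulN1r ?mul1r ?rmorphN. Qed.

Lemma lembed_mul m (i j : 'I_m) s t :
  lembed i j (lmul (i != j) (adjacent i j) s t) = Qmul (lembed i j s) (lembed i j t).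
Proof.
elim: s => [|p s IH]; first by rewrite Qmul0l.
rewrite /lmul allpairs_cons lembed_cat -/(lmul _ _ s t) IH /= QmulDl; congr Qadd; clear IH.
elim: t => [|r t IHt] /=; first by rewrite Qmul0r.
rewrite IHt QmulDr QmulZl QmulZr QmulZl Qmul_bQ lbasis_mul bsign_lbasis; congr Qadd.
by apply/ffunP => c; rewrite !ffunE sign_intE rmorphM /=; ring.
Qed.

Lemma lembedE m (i j : 'I_m) s c :
  lembed i j s c = \sum_w (lcoef s w)%:~R * (c == lbasis i j w)%:R.
Proof.
elim: s => [|p s IH] /=; first by rewrite ffunE big1 // => w _; rewrite mul0r.
under [RHS]eq_bigr do rewrite intrD mulrDl.
rewrite big_split /= !ffunE IH; congr (_ + _).
rewrite (bigD1 p.2) //= eqxx big1 ?addr0 // => w /negbTE nw.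
by rewrite eq_sym nw mul0r.
Qed.

Lemma lembed_eq m (i j : 'I_m) s t : lcoef s =1 lcoef t -> lembed i j s = lembed i j t.
Proof. by move=> st; apply/ffunP => c; rewrite !lembedE; apply: eq_bigr => w _; rewrite st. Qed.

Definition Qt m (i : 'I_m) : Q m :=
  Qadd (Qadd (Q1 m) (Qu i)) (Qadd (Qv i) (Qmul (Qu i) (Qv i))).

Definition lQt (d c : bool) (u v : lword) : lcomb :=
  [:: (1%Z, (false, false, false, false)); (1%Z, u); (1%Z, v)]
    ++ lmul d c [:: (1%Z, u)] [:: (1%Z, v)].

Lemma lembed1 m (i j : 'I_m) w : lembed i j [:: (1%Z, w)] = bQ (lbasis i j w).
Proof. by rewrite /= Qadd0r Qscale1. Qed.

Lemma lvec00 m (i j : 'I_m) : lvec i j false false = bzero m.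
Proof. by apply/ffunP => x; rewrite !ffunE andbF. Qed.

Lemma lvec10 m (i j : 'I_m) : lvec i j true false = bdelta i.
Proof. by apply/ffunP => x; rewrite !ffunE andbF addbF. Qed.

Lemma lvec01 m (i j : 'I_m) : i != j -> lvec i j false true = bdelta j.
Proof. by move=> ij; apply/ffunP => x; rewrite !ffunE ij. Qed.

Lemma Qt_lembedl m (i j : 'I_m) :
  Qt i = lembed i j
    (lQt (i != j) (adjacent i j) (true, false, false, false) (false, false, true, false)).
Proof.
rewrite /lQt lembed_cat lembed_mul !lembed1 /= Qadd0r !Qscale1 !lvec00 lvec10.
by rewrite /Qt -!QaddA.
Qed.

Lemma Qt_lembedr m (i j : 'I_m) : i != j ->
  Qt j = lembed i j
    (lQt (i != j) (adjacent i j) (false, true, false, false) (false, false, false, true)).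
Proof.
move=> ij; rewrite /lQt lembed_cat lembed_mul !lembed1 /= Qadd0r !Qscale1 !lvec00 lvec01 //.
by rewrite /Qt -!QaddA.
Qed.

Lemma Qt_braid m (i j : 'I_m) : val j = (val i).+1 ->
  Qmul (Qt i) (Qmul (Qt j) (Qt i)) = Qmul (Qt j) (Qmul (Qt i) (Qt j)).
Proof.
move=> ji.
have ij : i != j by rewrite -(inj_eq val_inj) ji neq_ltn ltnSn.
have adj : adjacent i j by rewrite /adjacent ji leqnn leqW.
rewrite (Qt_lembedr ij) (Qt_lembedl i j) -!lembed_mul ij adj; apply: lembed_eq.
by case=> [[[[] []] []] []]; vm_compute.
Qed.

Lemma Qt_commute m (i j : 'I_m) : ((val i).+1 < val j)%N -> Qmul (Qt i) (Qt j) = Qmul (Qt j) (Qt i).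
Proof.
move=> ij_far.
have ij : i != j by rewrite -(inj_eq val_inj) neq_ltn ltnW.
have adj : adjacent i j = false by rewrite /adjacent (leqNgt j) ij_far andbF.
rewrite (Qt_lembedr ij) (Qt_lembedl i j) -!lembed_mul ij adj; apply: lembed_eq.
by case=> [[[[] []] []] []]; vm_compute.
Qed.

Lemma Qt_sq m (i : 'I_m) : Qmul (Qt i) (Qt i) = Qadd (Qadd (Qt i) (Qt i)) (Qscale (-4) (Q1 m)).
Proof.
have -> : Qscale (-4) (Q1 m) = lembed i i [:: ((-4)%Z, (false, false, false, false))].
  by rewrite /= Qadd0r /= lvec00.
rewrite (Qt_lembedl i i) -!lembed_mul -!lembed_cat eqxx adjacentii; apply: lembed_eq.
by case=> [[[[] []] []] []]; vm_compute.
Qed.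

(** * The generators s_i *)

Lemma q6_sq : q6 ^+ 2 = q6 - 1.
Proof.
have sq_i3 : ('i * sqrtC 3 : algC) ^+ 2 = -3 by rewrite exprMn sqrCi sqrtCK mulN1r.
rewrite /q6; move: sq_i3; set x := _ * sqrtC 3 => sq_x.
apply/eqP; rewrite -subr_eq0; apply/eqP.
have -> : ((1 + x) / 2) ^+ 2 - ((1 + x) / 2 - 1) = (x ^+ 2 + 3) / 4 by field.
by rewrite sq_x addNr mul0r.
Qed.

Lemma q6_neq0 : q6 != 0.
Proof. by apply: contra_eqN q6_sq => /eqP->; rewrite expr0n sub0r eq_sym oppr_eq0 oner_eq0. Qed.

Lemma q6D1_neq0 : 1 + q6 != 0.
Proof.
apply: contra_eqN q6_sq; rewrite addrC addr_eq0 => /eqP->.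
rewrite sqrrN expr1n -subr_eq0.
have -> : (1 : algC) - (-1 - 1) = 3%:R by ring.
by rewrite pnatr_eq0.
Qed.

Definition c6 : algC := - (2 * q6)^-1.

Lemma c6E : c6 = (q6 - 1) / 2.
Proof.
have q6_inv : q6^-1 = 1 - q6.
  by apply: (mulfI q6_neq0); rewrite divff ?q6_neq0 // mulrBr mulr1 -expr2 q6_sq; ring.
by rewrite /c6 invfM q6_inv; field.
Qed.

Lemma c6_sq_2 : c6 * c6 * 2 = (q6 - 1) * c6.
Proof. by rewrite c6E; field. Qed.

Lemma c6_sq_4 : c6 * c6 * (-4) = q6.
Proof.
rewrite c6E; apply/eqP; rewrite -subr_eq0; apply/eqP.
have -> : (q6 - 1) / 2 * ((q6 - 1) / 2) * -4 - q6 = - (q6 ^+ 2 - q6 + 1) by field.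
by rewrite q6_sq; ring.
Qed.

Lemma q6_markov : (q6 - c6) / (1 + q6) = 1 / 2.
Proof. by rewrite c6E; field; rewrite q6D1_neq0. Qed.

Lemma Qs_Qt m (i : 'I_m) : Qs i = Qscale c6 (Qt i).
Proof. by []. Qed.

Lemma Qs_braid m (i j : 'I_m) : val j = (val i).+1 ->
  Qmul (Qs i) (Qmul (Qs j) (Qs i)) = Qmul (Qs j) (Qmul (Qs i) (Qs j)).
Proof. by move=> ji; rewrite !Qs_Qt !(QmulZl, QmulZr, QscaleA) Qt_braid. Qed.

Lemma Qs_commute m (i j : 'I_m) : ((val i).+1 < val j)%N ->
  Qmul (Qs i) (Qs j) = Qmul (Qs j) (Qs i).
Proof. by move=> ij_far; rewrite !Qs_Qt !(QmulZl, QmulZr, QscaleA) Qt_commute. Qed.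

Lemma Qs_sq m (i : 'I_m) :
  Qmul (Qs i) (Qs i) = Qadd (Qscale (q6 - 1) (Qs i)) (Qscale q6 (Q1 m)).
Proof.
rewrite !Qs_Qt !(QmulZl, QmulZr, QscaleA) Qt_sq.
move: (Qt i) (Q1 m) => t o; apply/ffunP => a; rewrite !ffunE -c6_sq_2 -c6_sq_4; ring.
Qed.

Lemma phi_word_cat m (a b : seq 'I_m) : phi_word (a ++ b) = Qmul (phi_word a) (phi_word b).
Proof. by elim: a => [|i a IH] /=; rewrite ?Qmul1l // IH QmulA. Qed.

Lemma phi_word1 m (i : 'I_m) : phi_word [:: i] = Qs i.
Proof. exact: Qmul1r. Qed.

(** * The Markov property of Tr *)

Definition basis_below m (k : nat) (a : basis m) : bool :=
  [forall j : 'I_m, (k <= j)%N ==> ~~ a.1 j && ~~ a.2 j].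

Definition supported_below m (k : nat) (x : Q m) : Prop :=
  forall a, ~~ basis_below k a -> x a = 0.

Lemma basis_below_mul m k (a b : basis m) :
  basis_below k a -> basis_below k b -> basis_below k (bmul a b).
Proof.
move=> /forallP a_k /forallP b_k; apply/forallP => j; apply/implyP => kj.
case/andP: (implyP (a_k j) kj) => /negbTE-a1 /negbTE-a2.
case/andP: (implyP (b_k j) kj) => /negbTE-b1 /negbTE-b2.
by rewrite !bxorE a1 a2 b1 b2.
Qed.

Lemma supported_below_mul m k (x y : Q m) :
  supported_below k x -> supported_below k y -> supported_below k (Qmul x y).
Proof.
move=> x_k y_k c c_k; rewrite QmulE big1 // => a _.
have [a_k | /x_k->] := boolP (basis_below k a); last by rewrite mulr0 mul0r.
rewrite y_k ?mulr0 //; apply: contra c_k => ac_k.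
by rewrite -(bmulK a c) basis_below_mul.
Qed.

Lemma supported_below_add m k (x y : Q m) :
  supported_below k x -> supported_below k y -> supported_below k (Qadd x y).
Proof. by move=> x_k y_k c c_k; rewrite ffunE x_k // y_k // addr0. Qed.

Lemma supported_below_scale m k l (x : Q m) :
  supported_below k x -> supported_below k (Qscale l x).
Proof. by move=> x_k c c_k; rewrite ffunE x_k // mulr0. Qed.

Lemma supported_below_bQ m k (a : basis m) : basis_below k a -> supported_below k (bQ a).
Proof. by move=> a_k c; apply: contraNeq; rewrite ffunE pnatr_eq0 eqb0 negbK => /eqP->. Qed.

Lemma supported_below_Q1 m k : supported_below k (Q1 m).
Proof. by apply: supported_below_bQ; apply/forallP => j; rewrite !ffunE implybT. Qed.

Lemma supported_below_Qu m k (j : 'I_m) : (j < k)%N -> supported_below k (Qu j).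
Proof.
move=> jk; apply: supported_below_bQ; apply/forallP => l; apply/implyP => kl.
by rewrite /= !ffunE andbT; apply: contraTneq kl => ->; rewrite -ltnNge.
Qed.

Lemma supported_below_Qv m k (j : 'I_m) : (j < k)%N -> supported_below k (Qv j).
Proof.
move=> jk; apply: supported_below_bQ; apply/forallP => l; apply/implyP => kl.
by rewrite /= !ffunE; apply: contraTneq kl => ->; rewrite -ltnNge.
Qed.

Lemma supported_below_Qs m k (j : 'I_m) : (j < k)%N -> supported_below k (Qs j).
Proof.
move=> jk; apply/supported_below_scale/supported_below_add.
  by apply: supported_below_add; [apply: supported_below_Q1 | apply: supported_below_Qu].
apply: supported_below_add; first exact: supported_below_Qv.
by apply: supported_below_mul; [apply: supported_below_Qu | apply: supported_below_Qv].
Qed.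

Lemma supported_below_phi_word m k (x : seq 'I_m) :
  all (fun i : 'I_m => (i < k)%N) x -> supported_below k (phi_word x).
Proof.
elim: x => [|i x IH] /=; first by move=> _; apply: supported_below_Q1.
by case/andP => ik x_k; apply: supported_below_mul (supported_below_Qs ik) (IH x_k).
Qed.

Lemma supported_below_genQ m k (b : Q m) :
  genQ (fun j : 'I_m => (j < k)%N) b -> supported_below k b.
Proof.
elim=> [i|i||x y _|l x _|x y _].
- exact: supported_below_Qu.
- exact: supported_below_Qv.
- exact: supported_below_Q1.
- by move=> x_k _; apply: supported_below_add.
- exact: supported_below_scale.
- by move=> x_k _; apply: supported_below_mul.
Qed.

Lemma Qt_free m (k : 'I_m) (a : basis m) : a.1 k = false -> a.2 k = false ->
  Qt k a = (a == bone m)%:R.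
Proof.
case: a => [a1 a2] /= a1k a2k.
have off (y y' : bvec m) : y k || y' k -> ((a1, a2) == (y, y')) = false.
  by apply: contraTF => /eqP[<- <-]; rewrite a1k a2k.
rewrite /Qt Qmul_bQ !ffunE (off (bdelta k)) ?ffunE ?eqxx //.
rewrite (off _ (bdelta k)) ?ffunE ?eqxx ?orbT // (off (bxor _ _)) ?bxorE ?ffunE ?eqxx //.
by rewrite /= mulr0 !addr0.
Qed.

Lemma Tr_mul_Qs m (k : 'I_m) (y : Q m) : supported_below k y -> Tr (Qmul y (Qs k)) = c6 * Tr y.
Proof.
move=> y_k; rewrite TrE_mul (bigD1 (bone m)) //= big1 ?addr0 => [|a a_neq1].
  by rewrite bsign1l mul1r Qs_Qt ffunE Qt_free ?ffunE // eqxx mulr1 mulrC.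
have [a_k | /y_k->] := boolP (basis_below k a); last by rewrite mulr0 mul0r.
case/andP: (implyP (forallP a_k k) (leqnn k)) => /negbTE-a1k /negbTE-a2k.
by rewrite Qs_Qt ffunE Qt_free // (negbTE a_neq1) !mulr0.
Qed.

Lemma Tr_mul_Qf m (k : 'I_m) (y : Q m) : supported_below k y -> Tr (Qmul y (Qf k)) = 1 / 2 * Tr y.
Proof.
move=> y_k; rewrite /Qf QmulZr QmulDr [Qmul y (Qscale q6 _)]QmulZr.
rewrite [Qmul y (Qscale (-1) _)]QmulZr Qmul1r TrZ TrD [Tr (Qscale q6 _)]TrZ.
by rewrite [Tr (Qscale (-1) _)]TrZ Tr_mul_Qs // -q6_markov; ring.
Qed.

Lemma Tr_Qf m (i : 'I_m) : Tr (Qf i) = 1 / 2.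
Proof.
rewrite -(Qmul1l (Qf i)) Tr_mul_Qf ?Tr1 ?mulr1 //.
exact: supported_below_Q1.
Qed.

Lemma Tr_Qf_mul m (i : 'I_m) (b : Q m) :
  supported_below i b -> Tr (Qmul (Qf i) b) = Tr (Qf i) * Tr b.
Proof. by move=> b_i; rewrite Tr_mulC Tr_mul_Qf // Tr_Qf. Qed.

Lemma TrPhi_markov m : is_markov_trace q6 (1 / 2) (@TrPhi m).
Proof.
rewrite /TrPhi; split; [|split; [|split; [|split; [|split]]]].
- by move=> a b i j ji; rewrite !phi_word_cat /= !Qmul1r Qs_braid.
- by move=> a b i j ij_far; rewrite !phi_word_cat /= !Qmul1r Qs_commute.
- move=> a b i; rewrite !phi_word_cat /= !Qmul1r Qs_sq QmulDl !QmulZl Qmul1l.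
  by rewrite QmulDr !QmulZr TrD !TrZ.
- exact: Tr1.
- by move=> a b; rewrite !phi_word_cat Tr_mulC.
- move=> k x x_k; rewrite -cats1 phi_word_cat phi_word1 Tr_mul_Qs.
    by rewrite -q6_markov; field; rewrite q6D1_neq0.
  exact: supported_below_phi_word.
Qed.

(** * Uniqueness of the Markov trace *)

Section HeckeWords.

Variables (m : nat) (q : algC).
Implicit Types (t : seq 'I_m -> algC) (a b u w x y : seq 'I_m).

Definition hecke_rel t : Prop :=
  (forall a b (i j : 'I_m), val j = (val i).+1 ->
     t (a ++ [:: i; j; i] ++ b) = t (a ++ [:: j; i; j] ++ b)) /\
  (forall a b (i j : 'I_m), ((val i).+1 < val j)%N ->
     t (a ++ [:: i; j] ++ b) = t (a ++ [:: j; i] ++ b)) /\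
  (forall a b (i : 'I_m),
     t (a ++ [:: i; i] ++ b) = (q - 1) * t (a ++ [:: i] ++ b) + q * t (a ++ b)).

Lemma markov_hecke_rel eta t : is_markov_trace q eta t -> hecke_rel t.
Proof. by case=> braid [comm [quad _]]; do !split. Qed.

Definition below k w := all (fun l : 'I_m => (val l < k)%N) w.

Lemma below_cat k x y : below k (x ++ y) = below k x && below k y.
Proof. exact: all_cat. Qed.

(* Every letter of [w] commutes with [g_k]. *)
Definition far_below k w := all (fun l : 'I_m => ((val l).+1 < k)%N) w.

Definition occ k w := count (fun l : 'I_m => val l == k) w.

Definition nf k w := all (fun l : 'I_m => (val l <= k)%N) w && (occ k w <= 1)%N.

Definition hecke_eq (M L : seq (algC * seq 'I_m)) : Prop :=
  forall t, hecke_rel t -> forall a b,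
    \sum_(p <- M) p.1 * t (a ++ p.2 ++ b) = \sum_(p <- L) p.1 * t (a ++ p.2 ++ b).

Definition spans (P : seq 'I_m -> Prop) w : Prop :=
  exists L : seq (algC * seq 'I_m),
    (forall t, hecke_rel t -> forall a b,
       t (a ++ w ++ b) = \sum_(p <- L) p.1 * t (a ++ p.2 ++ b))
    /\ (forall p, p \in L -> P p.2).

Lemma spans_refl (P : seq 'I_m -> Prop) w : P w -> spans P w.
Proof.
move=> Pw; exists [:: (1, w)]; split=> [t _ a b|p]; first by rewrite big_seq1 mul1r.
by rewrite inE => /eqP->.
Qed.

Lemma spans_sub (P P' : seq 'I_m -> Prop) w :
  (forall u, P u -> P' u) -> spans P w -> spans P' w.
Proof. by move=> PP' [L [tL PL]]; exists L; split=> // p /PL /PP'. Qed.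

Lemma spans_comb (P : seq 'I_m -> Prop) w (M : seq (algC * seq 'I_m)) :
  (forall t, hecke_rel t -> forall a b,
     t (a ++ w ++ b) = \sum_(p <- M) p.1 * t (a ++ p.2 ++ b)) ->
  (forall p, p \in M -> spans P p.2) -> spans P w.
Proof.
move=> tM MP.
have [L [ML PL]] : exists L, hecke_eq M L /\ (forall p, p \in L -> P p.2).
  elim: M {tM} MP => [|p M IH] MP; first by exists [::]; split=> // t _ a b; rewrite !big_nil.
  have [Lp [tLp PLp]] := MP p (mem_head _ _).
  have [|L [ML PL]] := IH; first by move=> r r_M; apply: MP; rewrite inE r_M orbT.
  exists ([seq (p.1 * r.1, r.2) | r <- Lp] ++ L); split; last first.
    by move=> r; rewrite mem_cat => /orP [/mapP [r' /PLp P_r' ->] | /PL].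
  move=> t rel a b; rewrite big_cons big_cat big_map /= ML // tLp // mulr_sumr.
  by congr (_ + _); apply: eq_bigr => r _; rewrite mulrA.
by exists L; split=> // t rel a b; rewrite tM // ML.
Qed.

Lemma hecke_move_right t (i : 'I_m) u a b : hecke_rel t -> far_below (val i) u ->
  t (a ++ i :: u ++ b) = t (a ++ u ++ i :: b).
Proof.
case=> _ [comm _]; elim: u a => [|l u IH] a //= /andP [li u_i].
by rewrite -(comm a (u ++ b) l i li) /= -cat_rcons IH // cat_rcons.
Qed.

Lemma hecke_reduce_far t (i : 'I_m) u a b : hecke_rel t -> far_below (val i) u ->
  t (a ++ i :: u ++ i :: b) = (q - 1) * t (a ++ u ++ i :: b) + q * t (a ++ u ++ b).
Proof.
move=> rel u_i; rewrite hecke_move_right //.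
by case: rel => _ [_ quad]; have := quad (a ++ u) b i; rewrite -!catA.
Qed.

Lemma hecke_reduce_braid t (i l : 'I_m) y1 y2 a b : hecke_rel t ->
  (val l).+1 = val i -> far_below (val i) y1 -> far_below (val i) y2 ->
  t (a ++ i :: (y1 ++ l :: y2) ++ i :: b) = t (a ++ y1 ++ [:: l; i; l] ++ y2 ++ b).
Proof.
move=> rel li y1_i y2_i; rewrite -catA hecke_move_right //= -cat_cons.
have := hecke_move_right (a ++ y1 ++ [:: i; l]) b rel y2_i; rewrite -!catA /= => <-.
by case: rel => braid _; have := braid (a ++ y1) (y2 ++ b) l i (esym li); rewrite -!catA.
Qed.

Lemma occ_split k w : (0 < occ k w)%N ->
  exists x (i : 'I_m) w', [/\ w = x ++ i :: w', val i = k & occ k x = 0%N].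
Proof.
rewrite -has_count; elim: w => [|l w IH] //= /orP [/eqP lk|w_k].
  by exists [::], l, w.
have [/eqP lk|lk] := boolP (val l == k); first by exists [::], l, w.
have [x [i [w' [-> ik x_k]]]] := IH w_k.
by exists (l :: x), i, w'; rewrite /occ /= (negbTE lk).
Qed.

Lemma below_occ0 k w : all (fun l : 'I_m => (val l <= k)%N) w -> occ k w = 0%N -> below k w.
Proof.
elim: w => //= l w IH /andP [lk w_k] /eqP; rewrite addn_eq0 eqb0 => /andP [kl /eqP occ_w].
by rewrite IH // andbT ltn_neqAle kl lk.
Qed.

Lemma far_below_le k u : far_below k u -> all (fun l : 'I_m => (val l <= k)%N) u.
Proof. by apply: sub_all => l /ltnW /ltnW. Qed.

Lemma far_below_occ0 k u : far_below k u -> occ k u = 0%N.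
Proof.
elim: u => //= l u IH /andP [lk u_k]; rewrite IH // addn0; apply/eqP.
by rewrite eqb0 neq_ltn (ltn_trans (ltnSn _) lk).
Qed.

Lemma nf_split k w : nf k w ->
  below k w \/ exists x (l : 'I_m) y, [/\ w = x ++ l :: y, val l = k, below k x & below k y].
Proof.
case/andP=> w_k occ_w; have [occ0|occ_pos] := posnP (occ k w).
  by left; apply: below_occ0.
right; have [x [l [y [def_w lk x_k]]]] := occ_split occ_pos.
move: w_k occ_w; rewrite def_w all_cat /= => /and3P [x_le _ y_le].
rewrite /occ count_cat /= -/(occ k x) -/(occ k y) x_k lk eqxx add1n ltnS leqn0 => /eqP y_k.
by exists x, l, y; split; rewrite // below_occ0.
Qed.

(* Every letter commutes with [g_k], except possibly one occurrence of [g_(k-1)]. *)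
Definition top_split k w : Prop :=
  far_below k w \/ exists x (l : 'I_m) y,
    [/\ w = x ++ l :: y, (val l).+1 = k, far_below k x & far_below k y].

Lemma nf_top_split k w : nf k w -> top_split k.+1 w.
Proof.
case/nf_split=> [w_k|[x [l [y [-> lk x_k y_k]]]]]; [left | right] => //.
by exists x, l, y; rewrite lk.
Qed.

Local Ltac cat_norm := rewrite /=; repeat (rewrite -catA /=).

Lemma spans_nf_step k : (forall y, below k y -> spans (top_split k) y) ->
  forall w, all (fun l : 'I_m => (val l <= k)%N) w -> spans (nf k) w.
Proof.
move=> below_spans.
suff nf_occ N w : (occ k w <= N)%N -> all (fun l : 'I_m => (val l <= k)%N) w -> spans (nf k) w.
  by move=> w; apply: nf_occ.
elim: N w => [|N IH] w occ_w w_le.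
  by apply: spans_refl; rewrite /nf w_le (leq_trans occ_w).
have [occ_le1|occ_gt1] := leqP (occ k w) 1; first by apply: spans_refl; rewrite /nf w_le.
have [x [i [w1 [def_w ik x_k]]]] := occ_split (ltnW occ_gt1); subst w.
have occ_xw1 : occ k (x ++ i :: w1) = (occ k w1).+1.
  by rewrite /occ count_cat /= -/(occ k x) x_k ik eqxx.
rewrite occ_xw1 ltnS in occ_gt1 occ_w.
have [y [j [z [def_w1 jk y_k]]]] := occ_split occ_gt1.
have ji : j = i by apply: val_inj; rewrite jk ik.
move: occ_w w_le; rewrite def_w1 ji /occ count_cat /= -!/(occ k _) y_k ik eqxx add0n add1n.
rewrite ltnS !all_cat /= all_cat /= ik leqnn => occ_z /and5P [x_le _ y_le _ z_le].
have [L [tL L_top]] := below_spans y (below_occ0 y_le y_k).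
apply: (spans_comb (M := [seq (p.1, x ++ i :: p.2 ++ i :: z) | p <- L])).
  move=> t rel a b; rewrite big_map; move: (tL t rel (a ++ x ++ [:: i]) (i :: z ++ b)).
  by cat_norm => ->; apply: eq_bigr => p _; cat_norm.
have i_le : (val i <= k)%N by rewrite ik.
move=> _ /mapP [p /L_top [p_far | [y1 [l [y2 [-> li y1_far y2_far]]]]] ->] /=.
- apply: (spans_comb (M := [:: (q - 1, x ++ p.2 ++ i :: z); (q, x ++ p.2 ++ z)])).
    move=> t rel a b; rewrite !big_cons big_nil addr0 /=.
    have p_i : far_below (val i) p.2 by rewrite ik.
    by move: (hecke_reduce_far (a ++ x) (z ++ b) rel p_i); cat_norm => ->; cat_norm.
  move=> r; rewrite !inE => /orP [] /eqP -> /=; apply: IH;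
    rewrite /occ ?count_cat /= -?/(occ k _) ?x_k ?(far_below_occ0 p_far) ?ik ?eqxx //=
      ?all_cat /= ?x_le ?(far_below_le p_far) ?z_le ?i_le //.
  exact: ltnW.
- apply: (spans_comb (M := [:: (1, x ++ y1 ++ [:: l; i; l] ++ y2 ++ z)])).
    move=> t rel a b; rewrite big_seq1 mul1r; rewrite -ik in li y1_far y2_far.
    by move: (hecke_reduce_braid (a ++ x) (z ++ b) rel li y1_far y2_far); cat_norm => ->; cat_norm.
  move=> r; rewrite !inE => /eqP -> /=; apply: IH.
    have lk : (val l == k) = false by rewrite -li ltn_eqF.
    rewrite /occ !count_cat /= count_cat -!/(occ k _) x_k lk ik eqxx.
    by rewrite (far_below_occ0 y1_far) (far_below_occ0 y2_far).
  have l_le : (val l <= k)%N by rewrite -li.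
  rewrite !all_cat /= all_cat x_le (far_below_le y1_far) l_le i_le.
  by rewrite (far_below_le y2_far) z_le.
Qed.

Lemma spans_nf k w : all (fun l : 'I_m => (val l <= k)%N) w -> spans (nf k) w.
Proof.
elim: k w => [|k IH] w; apply: spans_nf_step => {w} y y_k.
  by case: y y_k => // _; apply: spans_refl; left.
exact: spans_sub (@nf_top_split k) (IH y y_k).
Qed.

Lemma markov_trace_cut eta t x y (l : 'I_m) : is_markov_trace q eta t -> 1 + q != 0 ->
  below (val l) x -> below (val l) y -> t (x ++ l :: y) = (q - eta * (1 + q)) * t (y ++ x).
Proof.
case=> _ [_ [_ [_ [tC markov]]]] q1_neq0 x_l y_l.
rewrite -cat1s catA tC catA cats1.
move: (markov l (y ++ x)); rewrite -/(below (val l) (y ++ x)) below_cat y_l x_l => /(_ isT).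
move=> /(congr1 ( *%R^~ (1 + q))); rewrite divfK // => cut.
by rewrite -[t _](subKr (q * t (y ++ x))) cut; ring.
Qed.

Lemma markov_trace_unique eta t1 t2 : 1 + q != 0 ->
  is_markov_trace q eta t1 -> is_markov_trace q eta t2 -> t1 =1 t2.
Proof.
move=> q1_neq0 t1M t2M.
suff below_eq k w : below k w -> t1 w = t2 w.
  by move=> w; apply: (below_eq m); apply/allP => l _; apply: ltn_ord.
elim: k w => [|k IH] w w_k.
  case: w w_k => // _.
  by case: t1M => _ [_ [_ [-> _]]]; case: t2M => _ [_ [_ [-> _]]].
have [L [tL L_nf]] := spans_nf w_k.
move: (tL _ (markov_hecke_rel t1M) [::] [::]) (tL _ (markov_hecke_rel t2M) [::] [::]).
rewrite /= !cats0 => -> ->; apply: eq_big_seq => p /L_nf p_nf; rewrite !cats0.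
case: (nf_split p_nf) => [p_k | [x [l [y [-> lk x_k y_k]]]]]; first by rewrite IH.
have x_l : below (val l) x by rewrite lk.
have y_l : below (val l) y by rewrite lk.
by rewrite (markov_trace_cut t1M) // (markov_trace_cut t2M) // IH // below_cat y_k x_k.
Qed.

End HeckeWords.

Unset Implicit Arguments.

Theorem mainTheorem4 (n : nat) (hn : (2 <= n)%N) :
  [/\ is_markov_trace q6 (1 / 2) (@TrPhi n.-1),
      (forall t : seq 'I_n.-1 -> algC, is_markov_trace q6 (1 / 2) t ->
         forall w, t w = TrPhi w) &
      (forall i : 'I_n.-1, val i = n.-2 ->
         Tr (Qf i) = 1 / 2 /\
         (forall b : Q n.-1, genQ (fun j : 'I_n.-1 => (val j < n.-2)%N) b ->
            Tr (Qmul (Qf i) b) = Tr (Qf i) * Tr b))].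
Proof.
have TrPhiM := @TrPhi_markov n.-1.
split=> [//| t tM w | i i_top].
  exact: markov_trace_unique q6D1_neq0 tM TrPhiM w.
split=> [|b b_gen]; first exact: Tr_Qf.
by apply: Tr_Qf_mul; rewrite i_top; apply: supported_below_genQ.
Qed.
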